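(* Let $n\ge 1$ and let $\vec v=(v_1,\dots,v_n)\in\mathbb N_b^n$. For $1\le j\le n$ let $q_j=\#\{i:\ v_i=j\}$. Then there is exactly one complete expression in the letters $x_1,\dots,x_{n+1}$ in which, for every $j$, exactly $q_j$ left parentheses stand immediately to the left of $x_j$ (and no left parenthesis stands immediately to the left of $x_{n+1}$). Sending $\vec v$ to the tree of $Y_n$ corresponding to this complete expression defines a map $\mathrm{Tree}:\mathbb N_b^n\to Y_n$, and this map is surjective.
   Context: $\mathbb N_b^n=\{(v_1,\dots,v_n)\in\mathbb N^n:\ 1\le v_i\le i \text{ for all } i\}$. For $n\ge0$, $Y_n$ denotes the set of planar rooted binary trees with $n$ internal (trivalent) vertices, hence $n+1$ leaves, up to isotopy; $Y_0$ consists of the single trivial tree $|$. For $\tau_1\in Y_p,\tau_2\in Y_q$ the grafting $\tau_1\vee\tau_2\in Y_{p+q+1}$ is the tree with a new root vertex whose left subtree is $\tau_1$ and whose right subtree is $\tau_2$. A complete expression in the letters $x_1,\dots,x_{n+1}$ is a full binary parenthesization of the word $x_1x_2\cdots x_{n+1}$ in which every product of two factors, including the outermost one, is enclosed in a pair of parentheses (so there are $n$ pairs). Trees of $Y_n$ correspond bijectively to complete expressions: $|\mapsto x_1$, and $\tau_1\vee\tau_2\mapsto(E_1E_2)$ where $E_1,E_2$ are the complete expressions of $\tau_1,\tau_2$, with letters relabelled consecutively from left to right. *)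

From mathcomp Require Import all_boot.
Set Implicit Arguments. Unset Strict Implicit. Unset Printing Implicit Defensive.

(* Planar rooted binary trees: Leaf = the trivial tree |, Node l r = l \vee r. *)
Inductive btree : Type := Leaf | Node of btree & btree.

Fixpoint internal (t : btree) : nat :=
  match t with Leaf => 0 | Node l r => (internal l + internal r).+1 end.

Fixpoint leaves (t : btree) : nat :=
  match t with Leaf => 1 | Node l r => leaves l + leaves r end.

Inductive tok : Type := LP | RP | Let of nat.

Fixpoint cexpr (k : nat) (t : btree) : seq tok :=
  match t with
  | Leaf => [:: Let k]
  | Node l r => LP :: cexpr k l ++ cexpr (k + leaves l) r ++ [:: RP]
  end.

(* Number of left parentheses standing immediately to the left of the
   (first occurrence of the) letter x_j in the word w. *)
Fixpoint lp_before_aux (j acc : nat) (w : seq tok) : nat :=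
  match w with
  | [::] => 0
  | LP :: w' => lp_before_aux j acc.+1 w'
  | RP :: w' => lp_before_aux j 0 w'
  | Let i :: w' => if i == j then acc else lp_before_aux j 0 w'
  end.

Definition lp_before (j : nat) (w : seq tok) : nat := lp_before_aux j 0 w.

(* N_b^n, with v_i stored at index i-1 : 'I_n *)
Definition in_Nb (n : nat) (v : 'I_n -> nat) : Prop :=
  forall i : 'I_n, 1 <= v i <= i.+1.

Definition qcount (n : nat) (v : 'I_n -> nat) (j : nat) : nat :=
  #|[pred i : 'I_n | v i == j]|.

Definition tree_condition (n : nat) (v : 'I_n -> nat) (t : btree) : Prop :=
  internal t = n /\
  (forall j, 1 <= j <= n -> lp_before j (cexpr 1 t) = qcount v j) /\
  lp_before n.+1 (cexpr 1 t) = 0.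

From mathcomp Require Import all_boot zify.

Set Implicit Arguments.
Unset Strict Implicit.
Unset Printing Implicit Defensive.

(* Record, for each letter of the complete expression of a tree, the number of
   left parentheses standing immediately in front of it. This profile
   determines the tree, and the profiles of trees with n internal vertices are
   exactly the sequences of length n + 1 with sum n whose proper prefixes of
   length m sum to at least m: the left subtree ends at the first prefix where
   equality holds. For v in N_b^n the prefix of length m of (q_1, ..., q_(n+1))
   sums to #{i : v_i <= m}, which is at least m because v_i <= i. Conversely,
   a profile is the q-sequence of the v sending i to the letter in front of
   which the i-th left parenthesis stands. *)

Lemma leaves_internal t : leaves t = (internal t).+1.
Proof. by elim: t => [|l IHl r IHr] //=; rewrite IHl IHr addnS. Qed.

(* [nth 0 (lp_seq a t) k] is the number of left parentheses immediately to the
   left of the [k]-th letter of the complete expression of [t], when [a] left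
   parentheses are already standing in front of it. *)
Fixpoint lp_seq (a : nat) (t : btree) : seq nat :=
  match t with Leaf => [:: a] | Node l r => lp_seq a.+1 l ++ lp_seq 0 r end.

Lemma size_lp_seq a t : size (lp_seq a t) = leaves t.
Proof. by elim: t a => [|l IHl r IHr] a //=; rewrite size_cat IHl IHr. Qed.

Lemma lp_before_aux_cexpr j a k t w :
  lp_before_aux j a (cexpr k t ++ w) =
  if k <= j < k + leaves t then nth 0 (lp_seq a t) (j - k)
  else lp_before_aux j 0 w.
Proof.
elim: t j a k w => [|l IHl r IHr] j a k w /=.
  case: eqP => [->|neq_kj]; first by rewrite leqnn addn1 ltnSn subnn.
  by case: ifP => // /andP[? ?]; case: neq_kj; lia.
rewrite -catA IHl -catA IHr /= nth_cat size_lp_seq.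
have [/andP[? ?]|not_l] := boolP (k <= j < k + leaves l).
  by rewrite ifT ?ifT //; lia.
have [/andP[? ?]|not_r] := boolP (k + leaves l <= j < k + leaves l + leaves r).
  by rewrite ifT ?ifF ?subnDA //; lia.
by rewrite ifF //; apply/negbTE; lia.
Qed.

Lemma lp_before_cexpr j t : 0 < j <= leaves t ->
  lp_before j (cexpr 1 t) = nth 0 (lp_seq 0 t) j.-1.
Proof.
move=> j_range; rewrite /lp_before -[cexpr 1 t]cats0 lp_before_aux_cexpr.
by rewrite ifT ?subn1 //; lia.
Qed.

(* Proper prefixes of length [m] sum to at least [m + a], the whole sequence to
   [size s + a - 1]; by [lp_seq_ballot] and [ballot_lp_seq] these are exactly
   the profiles [lp_seq a t]. *)
Definition ballot (a : nat) (s : seq nat) : Prop :=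
  [/\ 0 < size s, sumn s + 1 = size s + a &
      forall m, 0 < m < size s -> m + a <= sumn (take m s)].

Lemma sumn_take_le m s : sumn (take m s) <= sumn s.
Proof. by rewrite -{2}(cat_take_drop m s) sumn_cat leq_addr. Qed.

Lemma sumn_take_S m s : m < size s ->
  sumn (take m.+1 s) = sumn (take m s) + nth 0 s m.
Proof. by move=> lt_ms; rewrite (take_nth 0 lt_ms) -cats1 sumn_cat /= addn0. Qed.

Lemma leq_sumn_take m m' s : m <= m' -> sumn (take m s) <= sumn (take m' s).
Proof. by move=> le_mm'; rewrite -(minn_idPl le_mm') take_min sumn_take_le. Qed.

Lemma lp_seq_ballot a t : ballot a (lp_seq a t).
Proof.
elim: t a => [|l IHl r IHr] a /=; first by split => //= [|m]; lia.
have [l_gt0 l_sum l_pre] := IHl a.+1; have [r_gt0 r_sum r_pre] := IHr 0.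
split; rewrite ?size_cat ?sumn_cat; [lia | lia |].
move=> m m_range; rewrite take_cat.
case: ltnP => [|le_lm]; first by have := l_pre m; lia.
rewrite sumn_cat; have [m_eq|?] := posnP (m - size (lp_seq a.+1 l)).
  by rewrite m_eq take0 /=; lia.
by have := r_pre (m - size (lp_seq a.+1 l)); lia.
Qed.

(* A ballot sequence has sum [size s + a - 1], too small to be a proper prefix
   of another ballot sequence for the same [a]. *)
Lemma ballot_cat_inj a s s' w w' :
  ballot a s -> ballot a s' -> s ++ w = s' ++ w' -> s = s'.
Proof.
wlog le_ss' : s s' w w' / size s <= size s'.
  move=> H bs bs' e; case: (leqP (size s) (size s')) => [|/ltnW] le.
    exact: H bs bs' e.
  exact/esym/(H s' s w' w).
move=> [s_gt0 s_sum _] [_ _ s'_pre] e.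
have s_take : s = take (size s) s'.
  rewrite -[LHS](take_size_cat w (erefl (size s))) e take_cat.
  case: ltngtP => // [gt_ss'|eq_ss']; first lia.
  by rewrite eq_ss' subnn take0 cats0 take_size.
case: (ltngtP (size s) (size s')) le_ss' => // [lt_ss'|eq_ss'] _.
  by have := s'_pre (size s); rewrite -s_take; lia.
by rewrite s_take eq_ss' take_size.
Qed.

Lemma lp_seq_inj a t t' : lp_seq a t = lp_seq a t' -> t = t'.
Proof.
elim: t a t' => [|l IHl r IHr] a [|l' r'] //=.
1,2: by move=> /(f_equal size) /=; rewrite size_cat !size_lp_seq !leaves_internal; lia.
move=> e; have el : lp_seq a.+1 l = lp_seq a.+1 l'.
  by apply: ballot_cat_inj e; apply: lp_seq_ballot.
move/eqP: e; rewrite el eqseq_cat // => /andP[_ /eqP er].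
by rewrite (IHl _ _ el) (IHr _ _ er).
Qed.

(* Split at the first proper prefix whose sum drops to its length plus [a]:
   it is the profile of the left subtree, the rest that of the right one. *)
Lemma ballot_split a s : 1 < size s -> ballot a s ->
  exists2 m, 0 < m < size s & ballot a.+1 (take m s) /\ ballot 0 (drop m s).
Proof.
move=> s_gt1 [s_gt0 s_sum s_pre].
pose low m := (0 < m) && (sumn (take m s) <= m + a).
have low_last : low (size s).-1.
  by apply/andP; split; [lia | have := sumn_take_le (size s).-1 s; lia].
have [m /andP[m_gt0 m_low] m_min] := ex_minnP (ex_intro low _ low_last).
have m_lt : m < size s by have := m_min _ low_last; lia.
have m_sum : sumn (take m s) = m + a by have := s_pre m; lia.
have s_sum_split : sumn s = sumn (take m s) + sumn (drop m s).
  by rewrite -{1}(cat_take_drop m s) sumn_cat.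
exists m; first by rewrite m_gt0.
split; split; rewrite ?size_takel ?size_drop ?(ltnW m_lt); try lia.
  move=> k k_range; rewrite take_takel; last lia.
  by case/boolP: (low k) => [/m_min|]; rewrite /low; lia.
by move=> k k_range; have := s_pre (m + k); rewrite takeD sumn_cat; lia.
Qed.

Lemma ballot_lp_seq a s : ballot a s -> exists t, lp_seq a t = s.
Proof.
have [N] := ubnP (size s); elim: N a s => // N IH a s size_lt bs.
have [s_gt1|s_le1] := ltnP 1 (size s).
  have [m m_range [bl br]] := ballot_split s_gt1 bs.
  have [l l_seq] : exists l, lp_seq a.+1 l = take m s.
    by apply: IH bl; rewrite size_takel; lia.
  have [r r_seq] : exists r, lp_seq 0 r = drop m s.
    by apply: IH br; rewrite size_drop; lia.
  by exists (Node l r); rewrite /= l_seq r_seq cat_take_drop.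
case: bs s_le1 {size_lt}; case: s => [|c []] //= _ c_sum _ _.
by exists Leaf; rewrite /= (_ : c = a) //; lia.
Qed.

Lemma sum_ord_ltn n m : \sum_(i < n) (i < m : nat) = minn m n.
Proof.
elim: n => [|n IH]; first by rewrite big_ord0 minn0.
by rewrite big_ord_recr /= IH; case: (ltnP n m) => /= ?; lia.
Qed.

Lemma leq_sum_imply n (P Q : pred 'I_n) : (forall i, P i -> Q i) ->
  \sum_(i < n) (P i : nat) <= \sum_(i < n) (Q i : nat).
Proof. by move=> PQ; apply: leq_sum => i _; case: (boolP (P i)) => // /PQ ->. Qed.

Lemma eq_from_sumn_take s s' : size s = size s' ->
  (forall m, m <= size s -> sumn (take m s) = sumn (take m s')) -> s = s'.
Proof.
move=> eq_size eq_sums; apply: (eq_from_nth (x0 := 0)) => // m lt_ms.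
have := eq_sums m.+1 lt_ms; rewrite !sumn_take_S -?eq_size // eq_sums ?(ltnW lt_ms) //.
exact: addnI.
Qed.

Section QSequence.
Variables (n : nat) (v : 'I_n -> nat).

Definition qseq : seq nat := mkseq (fun j => qcount v j.+1) n.+1.

Definition qcum (m : nat) : nat := \sum_(i < n) (v i <= m : nat).

Lemma qcountE j : qcount v j = \sum_(i < n) (v i == j : nat).
Proof. by rewrite /qcount -sum1_card big_mkcond; apply: eq_bigr => i _; rewrite inE. Qed.

Lemma qcumS m : qcum m.+1 = qcum m + qcount v m.+1.
Proof.
rewrite qcountE -big_split; apply: eq_bigr => i _ /=.
by case: ltngtP => /=; lia.
Qed.

Hypothesis v_Nb : in_Nb v.

Lemma qcum0 : qcum 0 = 0.
Proof. by rewrite /qcum big1 // => i _; have := v_Nb i; case: (v i). Qed.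

Lemma qcount_last : qcount v n.+1 = 0.
Proof. by apply: eq_card0 => i; rewrite !inE; have := v_Nb i; have := ltn_ord i; lia. Qed.

Lemma sumn_take_qseq m : m <= n.+1 -> sumn (take m qseq) = qcum m.
Proof.
elim: m => [|m IH] le_mn; first by rewrite take0 qcum0.
by rewrite sumn_take_S ?size_mkseq // IH 1?ltnW // nth_mkseq // qcumS.
Qed.

Lemma qseq_ballot : ballot 0 qseq.
Proof.
have qcum_ge m : m <= n -> m <= qcum m.
  move=> le_mn; rewrite -[m in m <= _](minn_idPl le_mn) -sum_ord_ltn.
  by apply: leq_sum_imply => i /=; have := v_Nb i; lia.
have qcum_last : qcum n.+1 = n.
  rewrite -[n in RHS]minnn -sum_ord_ltn; apply: eq_bigr => i _.
  by have := v_Nb i; have := ltn_ord i; case: ltnP; case: leqP; lia.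
split; rewrite size_mkseq //.
  by rewrite -(take_size qseq) size_mkseq sumn_take_qseq // qcum_last addn0 addn1.
by move=> m m_range; rewrite sumn_take_qseq ?addn0 ?qcum_ge; lia.
Qed.

Lemma tree_conditionP t : tree_condition v t <-> lp_seq 0 t = qseq.
Proof.
rewrite /tree_condition.
split=> [[t_n [lp_q lp_last]] | lp_q].
  apply: (eq_from_nth (x0 := 0)) => [|j]; rewrite size_lp_seq leaves_internal t_n ?size_mkseq //.
  move=> lt_jn; rewrite nth_mkseq //.
  have [lt_jn'|ge_jn] := ltnP j n.
    by rewrite -lp_q ?lp_before_cexpr ?leaves_internal ?t_n //; lia.
  have -> : j = n by lia.
  by rewrite qcount_last -[RHS]lp_last lp_before_cexpr ?leaves_internal ?t_n ?leqnn.
have t_n : internal t = n.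
  by have := congr1 size lp_q; rewrite size_lp_seq leaves_internal size_mkseq => -[].
split=> //; split=> [j j_range|]; rewrite lp_before_cexpr ?leaves_internal ?t_n ?lp_q.
- by rewrite nth_mkseq ?prednK //; lia.
- lia.
- by rewrite nth_mkseq // qcount_last.
- by rewrite leqnn.
Qed.

End QSequence.

Section QSequenceOnto.
Variables (n : nat) (s : seq nat).
Hypotheses (s_ballot : ballot 0 s) (size_s : size s = n.+1).

Local Notation psum k := (sumn (take k s)).

(* [qseq_inv i] is the least [m] with [i < psum m] (see [qseq_inv_leq]), i.e.
   the letter in front of which the [i.+1]-th left parenthesis stands. *)
Definition qseq_inv (i : 'I_n) : nat := \sum_(k < n.+1) (psum k <= i : nat).

Lemma psum_last : psum n.+1 = n.
Proof. by case: s_ballot; rewrite -size_s take_size size_s; lia. Qed.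

Lemma psum_ge k : k <= n -> k <= psum k.
Proof.
case: s_ballot => _ _ s_pre le_kn; have [->//|k_gt0] := posnP k.
by have := s_pre k; rewrite size_s; lia.
Qed.

Lemma qseq_inv_leq (i : 'I_n) m : m <= n.+1 -> (qseq_inv i <= m) = (i < psum m).
Proof.
move=> le_mn; have [lt_im|le_mi] := ltnP i (psum m).
  have below_m k : psum k <= i -> k < m.
    by case: (ltnP k m) => // /(leq_sumn_take s); lia.
  apply: leq_trans (leq_sum_imply below_m) _.
  by rewrite sum_ord_ltn geq_minl.
have lt_mn : m < n.+1.
  by case: ltngtP le_mn => // eq_m _; move: le_mi; rewrite eq_m psum_last leqNgt ltn_ord.
have upto_m k : k < m.+1 -> psum k <= i.
  by rewrite ltnS => le_km; apply: leq_trans (leq_sumn_take s le_km) le_mi.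
apply/negbTE; rewrite -ltnNge; apply: leq_trans (leq_sum_imply upto_m).
by rewrite sum_ord_ltn; lia.
Qed.

Lemma qseq_inv_Nb : in_Nb qseq_inv.
Proof.
move=> i; rewrite ltnNge (qseq_inv_leq i (leq0n _)) take0 /=.
by rewrite qseq_inv_leq ?ltnS ?psum_ge; have := ltn_ord i; lia.
Qed.

Lemma qcum_qseq_inv m : m <= n.+1 -> qcum qseq_inv m = psum m.
Proof.
move=> le_mn; rewrite /qcum (eq_bigr (fun i : 'I_n => (i < psum m : nat))).
  by rewrite sum_ord_ltn; apply/minn_idPl; rewrite -psum_last leq_sumn_take.
by move=> i _; rewrite qseq_inv_leq.
Qed.

Lemma qseq_onto : exists2 v : 'I_n -> nat, in_Nb v & qseq v = s.
Proof.
exists qseq_inv; first exact: qseq_inv_Nb.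
apply: eq_from_sumn_take => [|m]; rewrite size_mkseq ?size_s // => le_mn.
by rewrite sumn_take_qseq ?qcum_qseq_inv //; apply: qseq_inv_Nb.
Qed.

End QSequenceOnto.

Theorem proposition1 (n : nat) (hn : 1 <= n) :
  (forall v : 'I_n -> nat, in_Nb v ->
     exists t : btree, tree_condition v t /\
       (forall t' : btree, tree_condition v t' -> t' = t)) /\
  (forall t : btree, internal t = n ->
     exists v : 'I_n -> nat, in_Nb v /\ tree_condition v t).
Proof.
split=> [v v_Nb | t t_n].
  have [t t_q] := ballot_lp_seq (qseq_ballot v_Nb).
  exists t; split=> [|t' /(tree_conditionP v_Nb) t'_q]; first exact/(tree_conditionP v_Nb).
  by apply: (@lp_seq_inj 0); rewrite t_q t'_q.
have size_t : size (lp_seq 0 t) = n.+1 by rewrite size_lp_seq leaves_internal t_n.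
have [v v_Nb q_t] := qseq_onto (lp_seq_ballot 0 t) size_t.
by exists v; split=> //; apply/(tree_conditionP v_Nb); rewrite q_t.
Qed.
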